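(* For sufficiently large $n$, every integer $k \ge 4\log_2 n+2$, and every tournament $T_k$ on $k$ vertices, Breaker has a winning strategy in the $(2:1)$ Maker–Breaker game $\mathcal{H}(T_k,n)$.
   Context: The game $\mathcal{H}(T_k,n)=(X,\mathcal{F}(T_k))$ has board $X=\{(u,v): u,v\in V(K_n),\ u\ne v\}$, the set of all $n(n-1)$ ordered pairs of distinct vertices. Its winning sets are $\mathcal{F}(T_k)=\{S\subseteq X : S \text{ is (the arc set of) a copy of } T_k\}$. In the $(2:1)$ Maker–Breaker game on $(X,\mathcal{F})$, the players alternately claim unclaimed elements of $X$, Maker claiming $2$ elements per round and Breaker $1$ element per round. Maker wins if she claims all elements of some winning set; otherwise Breaker wins. A tournament is a digraph with exactly one directed edge between each pair of distinct vertices. *)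

From mathcomp Require Import all_boot.
Set Implicit Arguments.
Unset Strict Implicit.
Unset Printing Implicit Defensive.

(* A position is the pair
   (M, B) of the sets claimed by Maker and by Breaker.  The game ends when the board is fully claimed; Maker wins iff
   she has claimed all elements of some winning set (since Maker's set only
   grows, it suffices to check this at the end). *)
Section MBGame.
Variables (X : finType) (D : {set X}) (F : {set {set X}}) (a b : nat).

Definition free (M B : {set X}) : {set X} := D :\: (M :|: B).

Definition maker_has_won (M : {set X}) : bool :=
  [exists W in F, W \subset M].

(* breaker_wins_M M B : from position (M,B) with Maker to move, Breaker has a
   strategy guaranteeing Maker never claims a winning set.
   breaker_wins_B M B : same, with Breaker to move. *)
Inductive breaker_wins_M : {set X} -> {set X} -> Prop :=
| bwM_end M B :
    free M B = set0 -> ~~ maker_has_won M -> breaker_wins_M M B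
| bwM_step M B :
    free M B != set0 ->
    (forall S : {set X}, S \subset free M B -> #|S| = minn a #|free M B| ->
        breaker_wins_B (M :|: S) B) ->
    breaker_wins_M M B
with breaker_wins_B : {set X} -> {set X} -> Prop :=
| bwB_end M B :
    free M B = set0 -> ~~ maker_has_won M -> breaker_wins_B M B
| bwB_step M B :
    free M B != set0 ->
    (exists2 S : {set X}, S \subset free M B & #|S| = minn b #|free M B| /\
        breaker_wins_M M (B :|: S)) ->
    breaker_wins_B M B.

Definition breaker_wins : Prop := breaker_wins_M set0 set0.
End MBGame.

Definition is_tournament (k : nat) (T : rel 'I_k) : Prop :=
  (forall i, ~~ T i i) /\ (forall i j, i != j -> T i j != T j i).

Definition H_board (n : nat) : {set 'I_n * 'I_n} :=
  [set p | p.1 != p.2].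

Definition copy_arcs (k n : nat) (T : rel 'I_k) (f : {ffun 'I_k -> 'I_n})
  : {set 'I_n * 'I_n} :=
  [set (f p.1, f p.2) | p in [set p : 'I_k * 'I_k | T p.1 p.2]].

Definition H_winning (k n : nat) (T : rel 'I_k) : {set {set 'I_n * 'I_n}} :=
  [set S | [exists f : {ffun 'I_k -> 'I_n}, injectiveb f && (S == copy_arcs T f)]].

(* The proof is a Beck-type potential argument.  Fix s = sqrt 2.  While
   Maker holds M and Breaker holds B, a winning set A that Breaker has not
   hit weighs s^|A ∩ M|; the potential is the total weight of such sets,
   and the danger of a free element x is the total weight of those
   containing x.  If every winning set weighs at least t at the end of
   the game, Breaker wins as long as the potential stays below t.  Breaker
   always claims a free element z of maximal danger c: this removes weight
   c from the potential, and Maker's next two elements x, y raise it by at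
   most (danger x + danger y)/2 <= c, because s^j <= 1 + j/2 for j <= 2.
   Hence the potential never exceeds its initial value plus c <= 2|F|, and
   Breaker wins whenever 2|F| < t (Beck's criterion for the (2:1) game).

   For H(T_k, n) every winning set has m = k(k-1)/2 arcs and there are at
   most n^k copies, so the criterion reduces to 4 n^(2k) < 2^m, which is
   elementary arithmetic from 4 n^4 <= 2^k. *)

From Pilot Require Import Defs.
From mathcomp Require Import all_boot all_order all_algebra realalg.
From mathcomp Require Import zify lra.
Import Order.TTheory GRing.Theory Num.Theory.
Set Implicit Arguments.
Unset Strict Implicit.
Unset Printing Implicit Defensive.

Lemma disjoint_setU1r (T : finType) (A B : {set T}) (z : T) :
  [disjoint A & z |: B] = (z \notin A) && [disjoint A & B].
Proof.
by rewrite !disjoints_subset setCU subsetI -disjoints_subset disjoint_sym disjoints1.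
Qed.

Section BeckPotential.
Local Open Scope ring_scope.

Variables (R : realFieldType) (s : R).
Hypotheses (s_ge1 : 1 <= s) (s_sqr : s ^+ 2 = 2).
Variables (X : finType) (D : {set X}) (F : {set {set X}}) (t : R).
Hypothesis t_le_weight : forall A, A \in F -> t <= s ^+ #|A|.

Definition weight (M A : {set X}) : R := s ^+ #|A :&: M|.

Definition potential (M B : {set X}) : R :=
  \sum_(A in F | [disjoint A & B]) weight M A.

Definition danger (M B : {set X}) (x : X) : R :=
  \sum_(A in F | [disjoint A & B] && (x \in A)) weight M A.

Lemma weight_ge0 M A : 0 <= weight M A.
Proof. by rewrite exprn_ge0 // (le_trans ler01 s_ge1). Qed.

Lemma danger_ge0 M B x : 0 <= danger M B x.
Proof. by apply: sumr_ge0 => A _; apply: weight_ge0. Qed.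

Lemma potential_setU1 M B z : potential M B = potential M (z |: B) + danger M B z.
Proof.
rewrite /potential /danger (bigID (fun A : {set X} => z \in A)) /= addrC.
congr (_ + _); apply: eq_bigl => A; rewrite ?disjoint_setU1r;
  by case: (A \in F); case: (z \in A); case: [disjoint A & B].
Qed.

Lemma danger_setU1 M B z x : danger M (z |: B) x <= danger M B x.
Proof.
rewrite /danger big_mkcond [leRHS]big_mkcond /=; apply: ler_sum => A _.
rewrite disjoint_setU1r; case: (A \in F); case: (z \in A); case: [disjoint A & B];
  case: (x \in A) => //=; exact: weight_ge0.
Qed.

Lemma danger_le_potential M B x : danger M B x <= potential M B.
Proof.
rewrite /danger /potential big_mkcond [leRHS]big_mkcond /=; apply: ler_sum => A _.
by case: (A \in F); case: [disjoint A & B]; case: (x \in A) => //=; exact: weight_ge0.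
Qed.

(* Before Maker has claimed anything every set weighs 1. *)
Lemma potential0_le_card B : potential set0 B <= #|F|%:R.
Proof.
rewrite /potential -sum1_card natr_sum big_mkcond [leRHS]big_mkcond /=.
apply: ler_sum => A _; rewrite /weight setI0 cards0 expr0.
by case: (A \in F); case: [disjoint A & B].
Qed.

(* The convexity estimate behind the factor 1/2: s^j <= 1 + j/2 for j <= 2. *)
Lemma expr_le_half (j : nat) : (j <= 2)%N -> s ^+ j <= 1 + 2^-1 * j%:R.
Proof.
case: j => [|[|[|j]]] // _; rewrite ?expr0 ?expr1 ?s_sqr; [lra | | lra].
by move: s_sqr; rewrite expr2 => ss; nra.
Qed.

Lemma weight_claim (M S A : {set X}) : (#|S| <= 2)%N -> [disjoint M & S] ->
  weight (M :|: S) A <= weight M A + 2^-1 * (#|A :&: S|%:R * weight M A).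
Proof.
move=> S_le2 dMS.
have cardAMS : #|A :&: (M :|: S)| = (#|A :&: M| + #|A :&: S|)%N.
  by rewrite setIUr cardsU -setIIr (disjoint_setI0 dMS) setI0 cards0 subn0.
have AS_le2 : (#|A :&: S| <= 2)%N by rewrite (leq_trans (subset_leq_card (subsetIr _ _))).
rewrite /weight cardAMS exprD.
apply: le_trans (ler_wpM2l (weight_ge0 M A) (expr_le_half AS_le2)) _.
by rewrite /weight; lra.
Qed.

(* Double counting: summing dangers over S counts each alive set A
   |A ∩ S| times. *)
Lemma sum_danger (M B S : {set X}) :
  \sum_(x in S) danger M B x =
  \sum_(A in F | [disjoint A & B]) #|A :&: S|%:R * weight M A.
Proof.
have danger_ind x : danger M B x =
    \sum_(A in F | [disjoint A & B]) (x \in A)%:R * weight M A.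
  rewrite /danger [RHS]big_mkcond [LHS]big_mkcond /=; apply: eq_bigr => A _.
  by case: (A \in F); case: [disjoint A & B]; case: (x \in A); rewrite ?mul1r ?mul0r.
under eq_bigr do rewrite danger_ind.
rewrite exchange_big /=; apply: eq_bigr => A _.
rewrite -mulr_suml -sum1_card natr_sum big_mkcond [in RHS]big_mkcond /=.
by congr (_ * _); apply: eq_bigr => x _; rewrite !inE; case: (x \in A); case: (x \in S).
Qed.

Lemma potential_claim (M B S : {set X}) : (#|S| <= 2)%N -> [disjoint M & S] ->
  potential (M :|: S) B <= potential M B + 2^-1 * \sum_(x in S) danger M B x.
Proof.
move=> S_le2 dMS; rewrite sum_danger mulr_sumr -big_split /=.
by apply: ler_sum => A _; apply: weight_claim.
Qed.

Lemma maker_not_won (M B : {set X}) :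
  [disjoint M & B] -> potential M B < t -> ~~ maker_has_won F M.
Proof.
move=> dMB lt_t; apply/existsP => -[A /andP[AF AM]].
have : weight M A <= potential M B.
  rewrite /potential (bigD1 A) /=; last by rewrite AF (disjointWl AM dMB).
  by rewrite lerDl sumr_ge0 // => *; apply: weight_ge0.
rewrite /weight (setIidPl AM) => le_pot.
by have := le_lt_trans (le_trans (t_le_weight AF) le_pot) lt_t; rewrite ltxx.
Qed.

(* The invariant before Maker's move: the potential plus the largest danger
   of a free element stays below t. *)
Definition maker_turn_ok (M B : {set X}) :=
  exists c, [/\ 0 <= c, potential M B + c < t &
                forall x, x \in Defs.free D M B -> danger M B x <= c].

Lemma maker_turn_ok_potential (M B : {set X}) :
  maker_turn_ok M B -> potential M B < t.
Proof. by case=> c [c_ge0 lt_t _]; apply: le_lt_trans lt_t; rewrite lerDl. Qed.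

Lemma free_claimM (M B S : {set X}) :
  Defs.free D (M :|: S) B = Defs.free D M B :\: S.
Proof. by rewrite /Defs.free setDDl setUAC. Qed.

Lemma free_claimB (M B S : {set X}) :
  Defs.free D M (S :|: B) = Defs.free D M B :\: S.
Proof. by rewrite /Defs.free setDDl setUCA setUC. Qed.

Lemma disjoint_free (M B S : {set X}) : S \subset Defs.free D M B ->
  [disjoint M & S] /\ [disjoint S & B].
Proof.
rewrite /Defs.free setDE subsetI -disjoints_subset => /andP[_ dS].
by split; [rewrite disjoint_sym |]; apply: disjointWr dS; rewrite ?subsetUl ?subsetUr.
Qed.

Lemma breaker_reply (M B : {set X}) (z : X) : potential M B < t ->
  (forall x, x \in Defs.free D M B -> danger M B x <= danger M B z) ->
  maker_turn_ok M (z |: B).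
Proof.
move=> lt_t zmax; exists (danger M B z); split.
- exact: danger_ge0.
- by rewrite -potential_setU1.
- move=> x; rewrite free_claimB inE => /andP[_ xfree].
  exact: le_trans (danger_setU1 _ _ _ _) (zmax x xfree).
Qed.

Lemma maker_claim (M B S : {set X}) : maker_turn_ok M B ->
  S \subset Defs.free D M B -> (#|S| <= 2)%N -> potential (M :|: S) B < t.
Proof.
case=> c [c_ge0 lt_t small] Sfree S_le2.
have [dMS _] := disjoint_free Sfree.
apply: le_lt_trans (potential_claim B S_le2 dMS) _; apply: le_lt_trans lt_t.
have sum_le : \sum_(x in S) danger M B x <= c * #|S|%:R.
  have -> : c * #|S|%:R = \sum_(x in S) c by rewrite sumr_const mulr_natr.
  apply: ler_sum => x xS.
  exact/small/(subsetP Sfree).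
have S_le2R : #|S|%:R <= 2 :> R by rewrite ler_nat.
by rewrite lerD2l; nra.
Qed.

Lemma breaker_wins_end (M B : {set X}) :
  Defs.free D M B = set0 -> [disjoint M & B] ->
  (potential M B < t -> breaker_wins_B D F 2 1 M B) /\
  (maker_turn_ok M B -> breaker_wins_M D F 2 1 M B).
Proof.
move=> free0 dMB; split=> [|/maker_turn_ok_potential] lt_t;
  by constructor 1; rewrite // (maker_not_won dMB).
Qed.

Lemma breaker_wins_from (n : nat) (M B : {set X}) :
  (#|Defs.free D M B| <= n)%N -> [disjoint M & B] ->
  (potential M B < t -> breaker_wins_B D F 2 1 M B) /\
  (maker_turn_ok M B -> breaker_wins_M D F 2 1 M B).
Proof.
elim: n M B => [|n IH] M B free_le dMB.
  by apply: breaker_wins_end dMB; apply/eqP; rewrite -cards_eq0 -leqn0.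
have [free0 | free_ne0] := eqVneq (Defs.free D M B) set0.
  exact: breaker_wins_end.
have shrink (S : {set X}) : S \subset Defs.free D M B -> S != set0 ->
    (#|Defs.free D M B :\: S| <= n)%N.
  by move=> Sfree; rewrite cardsDS // -card_gt0; lia.
split=> [lt_t | turn_ok].
- have [z zfree zmax] : exists2 z, z \in Defs.free D M B &
      forall x, x \in Defs.free D M B -> danger M B x <= danger M B z.
    by case/set0Pn: free_ne0 => z0 /(arg_maxP (danger M B)) [z]; exists z.
  have zsub : [set z] \subset Defs.free D M B by rewrite sub1set.
  have [dMz _] := disjoint_free zsub.
  apply: bwB_step => //; exists [set z] => //; split.
    by rewrite cards1; apply/esym/minn_idPl; rewrite card_gt0.
  rewrite setUC; apply: (proj2 (IH M (z |: B) _ _)) (breaker_reply lt_t zmax).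
    by rewrite free_claimB shrink // -card_gt0 cards1.
  by rewrite disjoint_setU1r dMB andbT -disjoints1 disjoint_sym.
- apply: bwM_step => // S Sfree cardS.
  have [dMS dSB] := disjoint_free Sfree.
  have S_ne0 : S != set0 by rewrite -card_gt0 cardS leq_min card_gt0 free_ne0.
  apply: (proj1 (IH (M :|: S) B _ _)).
  - by rewrite free_claimM shrink.
  - by rewrite disjoints_subset subUset -!disjoints_subset dMB dSB.
  - by apply: maker_claim turn_ok Sfree _; rewrite cardS geq_minl.
Qed.

Theorem beck_criterion_21 : 2 * #|F|%:R < t -> breaker_wins D F 2 1.
Proof.
move=> ltF; apply: (proj2 (breaker_wins_from (leqnn _) _)).
  by rewrite -setI_eq0 setI0.
exists #|F|%:R; split; first exact: ler0n.
  by apply: le_lt_trans ltF; rewrite mulr2n mulrDl mul1r lerD2r potential0_le_card.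
by move=> x _; apply: le_trans (danger_le_potential _ _ _) (potential0_le_card _).
Qed.

End BeckPotential.

Lemma breaker_wins_21_large_sets (X : finType) (D : {set X}) (F : {set {set X}})
    (m : nat) :
  (forall A, A \in F -> m <= #|A|) -> 4 * #|F| ^ 2 < 2 ^ m ->
  breaker_wins D F 2 1.
Proof.
move=> size_ge ltF.
pose s : realalg := Num.sqrt 2.
have s_sqr : (s ^+ 2 = 2)%R by rewrite sqr_sqrtr // ler0n.
have s_ge1 : (1 <= s)%R by rewrite -sqrtr1 ler_sqrt // (ler_nat _ 1 2).
apply: (@beck_criterion_21 _ s s_ge1 s_sqr _ D F (s ^+ m)).
  by move=> A /size_ge; apply: ler_weXn2l.
have pow_ge0 : (0 <= s ^+ m)%R by rewrite exprn_ge0 // (le_trans ler01).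
rewrite -(@ltr_pXn2r _ 2) ?nnegrE ?mulr_ge0 ?ler0n //.
rewrite -exprM mulnC exprM s_sqr exprMn -!natrX -natrM ltr_nat.
exact: ltF.
Qed.

Lemma card_H_board (n : nat) : #|H_board n| = n * n - n.
Proof.
have diagE : ~: H_board n = [set (i, i) | i : 'I_n].
  apply/setP => -[i j]; rewrite !inE /= negbK.
  by apply/eqP/imsetP => [->|[x _ [-> ->]]]; first exists j.
have := cardsC (H_board n); rewrite diagE card_imset; last by move=> a b [].
by rewrite card_prod card_ord => <-; rewrite addnK.
Qed.

Definition tournament_arcs (k : nat) (T : rel 'I_k) : {set 'I_k * 'I_k} :=
  [set p | T p.1 p.2].

(* A tournament on k vertices has k(k-1)/2 arcs: its arcs and their
   reversals partition the off-diagonal pairs. *)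
Lemma card_tournament_arcs (k : nat) (T : rel 'I_k) : is_tournament T ->
  #|tournament_arcs T| * 2 = k * k - k.
Proof.
case=> irr tot.
pose swap (p : 'I_k * 'I_k) := (p.2, p.1).
have swap_inj : injective swap by move=> [a b] [c d] [-> ->].
set P := tournament_arcs T; set Q := swap @^-1: P.
have cardQ : #|Q| = #|P| by rewrite card_preimset.
have arc_or_reversed i j : (T i j || T j i) = (i != j) /\ (T i j && T j i) = false.
  case: (eqVneq i j) => [->|ne]; first by rewrite (negbTE (irr j)).
  by have := tot i j ne; case: (T i j); case: (T j i).
have PUQ : P :|: Q = H_board k.
  by apply/setP => -[i j]; rewrite !inE /=; case: (arc_or_reversed i j).
have PIQ : P :&: Q = set0.
  by apply/setP => -[i j]; rewrite !inE /=; case: (arc_or_reversed i j).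
by have := cardsUI P Q; rewrite PUQ PIQ cards0 cardQ addn0 card_H_board; lia.
Qed.

Lemma card_copy_arcs (k n : nat) (T : rel 'I_k) (f : {ffun 'I_k -> 'I_n}) :
  injective f -> #|copy_arcs T f| = #|tournament_arcs T|.
Proof.
by move=> f_inj; rewrite card_imset // => -[a b] [c d] /= [/f_inj -> /f_inj ->].
Qed.

Lemma card_H_winning (k n : nat) (T : rel 'I_k) : #|H_winning n T| <= n ^ k.
Proof.
have sub : H_winning n T \subset copy_arcs T @: [set: {ffun 'I_k -> 'I_n}].
  apply/subsetP => A; rewrite inE => /existsP[f /andP[_ /eqP ->]].
  by rewrite imset_f ?inE.
apply: leq_trans (subset_leq_card sub) _; apply: leq_trans (leq_imset_card _ _) _.
by rewrite cardsT card_ffun !card_ord.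
Qed.

(* The arithmetic core: if 4 n^4 <= 2^k and n >= 2 then 4 (n^k)^2 < 2^m
   for m = k(k-1)/2.  Squaring and multiplying by 4^k, the left side
   becomes 16 (4 n^4)^k <= 16 * 2^(k^2), the right one 2^k * 2^(k^2). *)
Lemma copies_below_threshold (n k m : nat) :
  2 <= n -> n ^ 4 * 4 <= 2 ^ k -> m * 2 = k * k - k -> 4 * (n ^ k) ^ 2 < 2 ^ m.
Proof.
move=> n_ge2 k_large hm.
have k_ge6 : 6 <= k.
  rewrite -(@leq_exp2l 2) // (leq_trans _ k_large) // (@leq_trans (2 ^ 4 * 4)) //.
  by rewrite leq_mul2r leq_exp2r.
rewrite -(@ltn_exp2r _ _ 2) // -(@ltn_pmul2r (4 ^ k)) ?expn_gt0 //.
have lhs_scaled : (4 * (n ^ k) ^ 2) ^ 2 * 4 ^ k = 16 * (n ^ 4 * 4) ^ k.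
  by rewrite expnMn -!expnM expnMn -expnM -mulnA (mulnC k (2 * 2)).
have rhs_scaled : (2 ^ m) ^ 2 * 4 ^ k = 2 ^ (k * k) * 2 ^ k.
  by rewrite -expnM (_ : 4 = 2 ^ 2) // -expnM -!expnD; congr (2 ^ _); nia.
rewrite lhs_scaled rhs_scaled.
have le_k2 : (n ^ 4 * 4) ^ k <= 2 ^ (k * k) by rewrite expnM leq_exp2r // (leq_trans _ k_ge6).
have gt16 : 16 < 2 ^ k by rewrite (@leq_trans (2 ^ 5)) // leq_exp2l // ltnW.
have pos : 0 < 2 ^ (k * k) by rewrite expn_gt0.
nia.
Qed.

Theorem mainTheorem6 :
  exists N : nat, forall n : nat, N <= n ->
  forall k : nat, n ^ 4 * 4 <= 2 ^ k ->
  forall T : rel 'I_k, is_tournament T ->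
  breaker_wins (H_board n) (H_winning n T) 2 1.
Proof.
exists 2 => n n_ge2 k hk T T_tour.
apply: (@breaker_wins_21_large_sets _ _ _ #|tournament_arcs T|).
  move=> A; rewrite inE => /existsP[f /andP[/injectiveP f_inj /eqP ->]].
  by rewrite card_copy_arcs.
have few_copies := copies_below_threshold n_ge2 hk (card_tournament_arcs T_tour).
apply: leq_ltn_trans few_copies.
by rewrite leq_mul2l leq_exp2r ?card_H_winning.
Qed.
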